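(* Let $k$ be an algebraically closed field of characteristic zero. Let $Y=\operatorname{Spec} B$ and $T=\operatorname{Spec} R$ be irreducible affine varieties over $k$, let $f : Y\to T$ be a dominant morphism whose general fibers are irreducible and reduced, regard $R\subset B$ via $f^*$, and let $D$ be an $R$-trivial derivation of $B$ such that for each closed point $t\in T$ with maximal ideal $\mathfrak m$, the induced derivation $D\otimes_R R/\mathfrak m$ of $B\otimes_R R/\mathfrak m$ is locally nilpotent. Then there exist a subfield $k_0\subset k$ which is a finitely generated field extension of $\mathbb Q$, geometrically integral affine $k_0$-varieties $Y_0=\operatorname{Spec} B_0$ and $T_0=\operatorname{Spec} R_0$, a dominant morphism $f_0 : Y_0\to T_0$ and an $R_0$-trivial derivation $D_0$ of $B_0$ such that: (1) $Y_0,T_0,f_0,D_0$ are defined over $k_0$; (2) $Y=Y_0\otimes_{k_0}k$, $T=T_0\otimes_{k_0}k$, $f=f_0\otimes_{k_0}k$ and $D=D_0\otimes_{k_0}k$; (3) $D_0$ is locally nilpotent if and only if $D$ is locally nilpotent.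
   Context: A derivation $\delta$ of a ring $A$ is locally nilpotent if for every $a\in A$ some power $\delta^n(a)=0$. An $R$-trivial derivation of $B$ is a derivation vanishing on $R$. *)

From HB Require Import structures.
From mathcomp Require Import all_boot all_order all_algebra.
Set Implicit Arguments. Unset Strict Implicit. Unset Printing Implicit Defensive.
Import GRing.Theory.
Local Open Scope ring_scope.

Definition is_subfield (k : fieldType) (F : k -> Prop) : Prop :=
  [/\ F 0, F 1,
      (forall x y, F x -> F y -> F (x - y)),
      (forall x y, F x -> F y -> F (x * y)) &
      (forall x, F x -> F x^-1)].

Definition fg_field_over_Q (k : fieldType) (F : k -> Prop) : Prop :=
  is_subfield F /\
  exists s : seq k, {in s, forall x, F x} /\
    forall G : k -> Prop, is_subfield G -> {in s, forall x, G x} ->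
      forall x, F x -> G x.

Section Alg.
Variables (k : fieldType) (B : comAlgType k).

Definition is_subalg_over (F : k -> Prop) (A : B -> Prop) : Prop :=
  [/\ (forall c, F c -> A (c%:A)),
      (forall x y, A x -> A y -> A (x + y)) &
      (forall x y, A x -> A y -> A (x * y))].

Definition fg_subalg_over (F : k -> Prop) (A : B -> Prop) : Prop :=
  is_subalg_over F A /\
  exists gens : seq B, {in gens, forall x, A x} /\
    forall C : B -> Prop, is_subalg_over F C -> {in gens, forall x, C x} ->
      forall x, A x -> C x.

Definition is_domain : Prop :=
  (1 : B) != 0 /\ forall a b : B, a * b = 0 -> a = 0 \/ b = 0.

Definition is_ideal_of (R I : B -> Prop) : Prop :=
  [/\ (forall x, I x -> R x), I 0,
      (forall x y, I x -> I y -> I (x + y)) &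
      (forall r x, R r -> I x -> I (r * x))].

Definition is_max_ideal_of (R m : B -> Prop) : Prop :=
  [/\ is_ideal_of R m, ~ m 1 &
      forall I, is_ideal_of R I -> (forall x, m x -> I x) -> ~ I 1 ->
        forall x, I x -> m x].

Definition ext_ideal (m : B -> Prop) (b : B) : Prop :=
  exists (ms bs : seq B), size ms = size bs /\ {in ms, forall x, m x} /\
    b = \sum_(i < size ms) ms`_i * bs`_i.

Definition is_prime_ideal (P : B -> Prop) : Prop :=
  [/\ P 0, (forall x y, P x -> P y -> P (x + y)),
      (forall r x, P x -> P (r * x)), ~ P 1 &
      (forall x y, P (x * y) -> P x \/ P y)].

Definition is_derivation (D : B -> B) : Prop :=
  forall a b, D (a + b) = D a + D b /\ D (a * b) = a * D b + D a * b.

Definition loc_nilp_on (A : B -> Prop) (D : B -> B) : Prop :=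
  forall a, A a -> exists n, iter n D a = 0.

(* D (x) R/m is locally nilpotent on B (x)_R R/m = B / mB *)
Definition loc_nilp_mod (m : B -> Prop) (D : B -> B) : Prop :=
  forall b, exists n, ext_ideal m (iter n D b).

Definition lin_indep_over (F : k -> Prop) (s : seq B) : Prop :=
  forall c : seq k, size c = size s -> {in c, forall x, F x} ->
    \sum_(i < size s) c`_i *: s`_i = 0 -> forall i, c`_i = 0.

Definition in_kspan (A0 : B -> Prop) (b : B) : Prop :=
  exists (c : seq k) (s : seq B), size c = size s /\ {in s, forall x, A0 x} /\
    b = \sum_(i < size s) c`_i *: s`_i.

(* A0 (an F-subspace of A) is an F-form of the k-subspace A, i.e. the natural
   map A0 (x)_F k -> A is an isomorphism: injective (F-independent families in
   A0 stay k-independent) and surjective (A0 spans A over k). *)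
Definition is_form_of (F : k -> Prop) (A0 A : B -> Prop) : Prop :=
  [/\ (forall x, A0 x -> A x),
      (forall s : seq B, {in s, forall x, A0 x} ->
         lin_indep_over F s -> lin_indep_over (fun _ => True) s) &
      (forall b, A b -> in_kspan A0 b)].
End Alg.

(* Fix generators of B and order the monomials in them by the graded
   lexicographic order. A monomial is standard when it is not a k-combination
   of smaller monomials; the standard monomials form a k-basis of B. By
   Dickson's lemma the nonstandard monomials are the multiples of finitely
   many of them, each of which reduces to a combination of smaller standard
   monomials. Let K0 be the field generated by the coefficients of these
   reductions and of the expansions of the D-images of the generators of B
   and of the generators of R. Then every monomial reduces over K0, so the
   K0-algebra B0 generated by the generators of B has the standard monomials
   as a K0-basis; hence K0-independence in B0 implies k-independence, since a
   linear system with coefficients in K0 that has only the trivial solution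
   over K0 has only the trivial solution over k. D preserves B0, and B0 spans
   B, so D is locally nilpotent on B0 iff it is on B. *)

From mathcomp Require Import all_boot all_order all_algebra.
From mathcomp Require Import mpoly.
From mathcomp Require Import ring.
From Stdlib Require Import Classical ClassicalEpsilon.
Set Implicit Arguments. Unset Strict Implicit. Unset Printing Implicit Defensive.
Import Order.TTheory GRing.Theory.
Local Open Scope ring_scope.

Section SubfieldFacts.
Variables (k : fieldType) (F : k -> Prop).
Hypothesis subF : is_subfield F.

Lemma subfield0 : F 0. Proof. by case: subF. Qed.
Lemma subfield1 : F 1. Proof. by case: subF. Qed.
Lemma subfieldB x y : F x -> F y -> F (x - y). Proof. by case: subF => _ _ + _ _; apply. Qed.
Lemma subfieldM x y : F x -> F y -> F (x * y). Proof. by case: subF => _ _ _ + _; apply. Qed.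
Lemma subfieldV x : F x -> F x^-1. Proof. by case: subF => _ _ _ _; apply. Qed.
Lemma subfieldN x : F x -> F (- x).
Proof. by move=> Fx; rewrite -sub0r; apply: subfieldB => //; apply: subfield0. Qed.
Lemma subfieldD x y : F x -> F y -> F (x + y).
Proof. by move=> Fx Fy; rewrite -[y]opprK; apply: subfieldB => //; apply: subfieldN. Qed.
Lemma subfield_sum (I : Type) (r : seq I) (P : pred I) (f : I -> k) :
  (forall i, P i -> F (f i)) -> F (\sum_(i <- r | P i) f i).
Proof. by move=> Ff; apply: big_ind => //; [apply: subfield0 | apply: subfieldD]. Qed.
End SubfieldFacts.

Lemma subfieldT (k : fieldType) : is_subfield (fun _ : k => True).
Proof. by []. Qed.

Section Span.
Variables (k : fieldType) (B : comAlgType k).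
Implicit Types (F : k -> Prop) (V W : B -> Prop).

Definition in_span F V b := exists l : seq (k * B),
  (forall p, p \in l -> F p.1 /\ V p.2) /\ b = \sum_(p <- l) p.1 *: p.2.

Definition mul_closed F := forall x y, F x -> F y -> F (x * y).

Lemma in_span0 F V : in_span F V 0.
Proof. by exists [::]; rewrite big_nil. Qed.

Lemma in_spanD F V a b : in_span F V a -> in_span F V b -> in_span F V (a + b).
Proof.
move=> [l1 [H1 ->]] [l2 [H2 ->]]; exists (l1 ++ l2); rewrite big_cat; split => // p.
by rewrite mem_cat => /orP[/H1|/H2].
Qed.

Lemma in_span_scale F V c x : F c -> V x -> in_span F V (c *: x).
Proof. by move=> Fc Vx; exists [:: (c, x)]; rewrite big_seq1; split=> // p /[1!inE] /eqP->. Qed.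

Lemma in_span_mem F V x : F 1 -> V x -> in_span F V x.
Proof. by move=> F1 Vx; rewrite -[x]scale1r; apply: in_span_scale. Qed.

Lemma in_span_trans F V W b : mul_closed F -> (forall x, V x -> in_span F W x) ->
  in_span F V b -> in_span F W b.
Proof.
move=> mulF VW [l [Hl ->]]; elim: l Hl => [|p l IH] Hl; first by rewrite big_nil; apply: in_span0.
rewrite big_cons; apply: in_spanD; last by apply: IH => q ql; apply: Hl; rewrite inE ql orbT.
have [Fp /VW [l' [Hl' ->]]] := Hl p (mem_head _ _).
exists [seq (p.1 * q.1, q.2) | q <- l']; rewrite big_map scaler_sumr; split.
  by move=> _ /mapP[q /Hl' [Fq Wq] ->]; split => //; apply: mulF.
by apply: eq_bigr => q _; rewrite scalerA.
Qed.

Lemma in_span_mono F G V W b : (forall c, F c -> G c) -> (forall x, V x -> W x) ->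
  in_span F V b -> in_span G W b.
Proof. by move=> FG VW [l [Hl ->]]; exists l; split => // p /Hl[/FG ? /VW ?]. Qed.

Lemma in_span_mulr F V W a y : (forall x, V x -> W (x * y)) ->
  in_span F V a -> in_span F W (a * y).
Proof.
move=> VW [l [Hl ->]]; exists [seq (p.1, p.2 * y) | p <- l]; split.
  by move=> _ /mapP[p /Hl[? ?] ->]; split => //; apply: VW.
by rewrite big_map mulr_suml; apply: eq_bigr => p _; rewrite scalerAl.
Qed.

Lemma in_spanM F V a b : mul_closed F -> (forall x y, V x -> V y -> V (x * y)) ->
  in_span F V a -> in_span F V b -> in_span F V (a * b).
Proof.
move=> mulF mulV Va Vb; apply: (in_span_trans (V := in_span F V)) => //.
apply: in_span_mulr Va => x Vx; rewrite mulrC; apply: in_span_mulr Vb => y Vy.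
by rewrite mulrC; apply: mulV.
Qed.

Lemma in_span_subalg F V : mul_closed F -> V 1 ->
  (forall x y, V x -> V y -> V (x * y)) -> is_subalg_over F (in_span F V).
Proof.
move=> mulF V1 mulV; split; [|exact: in_spanD|by move=> x y; apply: in_spanM].
by move=> c Fc; apply: in_span_scale.
Qed.

Lemma in_span_kspan V b : in_span (fun _ => True) V b -> in_kspan V b.
Proof.
move=> [l [Hl ->]]; exists (map fst l), (map snd l); rewrite !size_map; split=> //; split.
  by move=> _ /mapP[p /Hl[_ ?] ->].
by rewrite (big_nth (0, 0)) big_mkord; apply: eq_bigr => i _; rewrite !(nth_map (0, 0)).
Qed.

End Span.

Section Generated.
Variables (k : fieldType) (B : comAlgType k).
Implicit Types (F : k -> Prop) (A : B -> Prop) (gs : seq B).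

Definition gen_subfield (s : seq k) (x : k) :=
  forall F, is_subfield F -> {in s, forall y, F y} -> F x.

Definition gen_subalg F gs (x : B) :=
  forall C, is_subalg_over F C -> {in gs, forall y, C y} -> C x.

Lemma gen_subfieldP s : is_subfield (gen_subfield s).
Proof.
split=> [F [] //|F [] //|x y Fx Fy F subF sF|x y Fx Fy F subF sF|x Fx F subF sF].
- by apply: (subfieldB subF); [apply: Fx | apply: Fy].
- by apply: (subfieldM subF); [apply: Fx | apply: Fy].
- by apply: (subfieldV subF); apply: Fx.
Qed.

Lemma mem_gen_subfield s : {in s, forall y, gen_subfield s y}.
Proof. by move=> y ys F _; apply. Qed.

Lemma gen_subfield_fg s : fg_field_over_Q (gen_subfield s).
Proof.
split; first exact: gen_subfieldP.
by exists s; split=> [|G subG sG x]; [apply: mem_gen_subfield | apply].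
Qed.

Lemma gen_subalgP F gs : is_subalg_over F (gen_subalg F gs).
Proof.
split=> [c Fc C [Cscal _ _] _|x y Cx Cy C subC gsC|x y Cx Cy C subC gsC]; first exact: Cscal.
- by case: (subC) => _ + _; apply; [apply: Cx | apply: Cy].
- by case: (subC) => _ _; apply; [apply: Cx | apply: Cy].
Qed.

Lemma mem_gen_subalg F gs : {in gs, forall y, gen_subalg F gs y}.
Proof. by move=> y ys C _; apply. Qed.

Lemma gen_subalg_fg F gs : fg_subalg_over F (gen_subalg F gs).
Proof.
split; first exact: gen_subalgP.
by exists gs; split=> [|C subC gsC x]; [apply: mem_gen_subalg | apply].
Qed.

Lemma gen_subalg0 F gs : is_subfield F -> gen_subalg F gs 0.
Proof.
by move=> subF; rewrite -(scale0r 1); case: (gen_subalgP F gs) => + _ _; apply; apply: subfield0.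
Qed.

Lemma gen_subalg1 F gs : is_subfield F -> gen_subalg F gs 1.
Proof.
by move=> subF; rewrite -(scale1r 1); case: (gen_subalgP F gs) => + _ _; apply; apply: subfield1.
Qed.

Lemma gen_subalg_form F gs A : is_subfield F ->
  is_subalg_over (fun _ => True) A -> {in gs, forall y, A y} ->
  (forall x, A x -> gen_subalg (fun _ => True) gs x) ->
  (forall s, {in s, forall x, gen_subalg F gs x} ->
     lin_indep_over F s -> lin_indep_over (fun _ => True) s) ->
  is_form_of F (gen_subalg F gs) A.
Proof.
move=> subF [Ascal Aadd Amul] gsA Agen indep; split=> // [x Fx|b /Agen Ab].
  by apply: Fx => //; split=> // c _; apply: Ascal.
apply: in_span_kspan; apply: Ab => [|y ys]; last by apply: in_span_mem => //; apply: mem_gen_subalg.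
apply: in_span_subalg => //; first exact: gen_subalg1.
by case: (gen_subalgP F gs).
Qed.

End Generated.

Section Derivation.
Variables (k : fieldType) (B : comAlgType k) (D : B -> B).
Hypotheses (derD : is_derivation D) (Dscal : forall c, D c%:A = 0).

Lemma derivation_lin c a b : D (c *: a + b) = c *: D a + D b.
Proof.
have [-> _] := derD (c *: a) b; congr (_ + _).
by rewrite -[c *: a]mulr_algl; have [_ ->] := derD c%:A a; rewrite Dscal mul0r addr0 mulr_algl.
Qed.

Lemma iter_derivation_lin n c a b :
  iter n D (c *: a + b) = c *: iter n D a + iter n D b.
Proof. by elim: n => //= n ->; rewrite derivation_lin. Qed.

Lemma iter_derivation0 n : iter n D 0 = 0.
Proof.
have := iter_derivation_lin n 1 0 0; rewrite scale1r addr0 scale1r.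
by move=> h; apply: (addrI (iter n D 0)); rewrite addr0 -h.
Qed.

Lemma loc_nilp_of_span A0 : (forall b, in_span (fun _ => True) A0 b) ->
  loc_nilp_on A0 D -> loc_nilp_on (fun _ => True) D.
Proof.
move=> spanA0 nilA0 b _; have [l [Hl ->]] := spanA0 b.
elim: l Hl => [|p l IH] Hl; first by exists 0%N; rewrite big_nil.
have [n1 Hn1] := IH (fun q ql => Hl q (@mem_behead _ (p :: l) _ ql)).
have [n2 Hn2] := nilA0 _ (Hl p (mem_head _ _)).2.
exists (n1 + n2)%N; rewrite big_cons iter_derivation_lin.
by rewrite iterD Hn2 iter_derivation0 addnC iterD Hn1 iter_derivation0 scaler0 addr0.
Qed.

Lemma gen_subalg_derivation F gs : is_subfield F ->
  {in gs, forall y, gen_subalg F gs (D y)} ->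
  forall x, gen_subalg F gs x -> gen_subalg F gs (D x).
Proof.
move=> subF gsD x Gx; have [scalG addG mulG] := gen_subalgP F gs.
suff [] : gen_subalg F gs x /\ gen_subalg F gs (D x) by [].
apply: (Gx (fun z => gen_subalg F gs z /\ gen_subalg F gs (D z))); last first.
  by move=> y ys; split; [apply: mem_gen_subalg | apply: gsD].
split=> [c Fc|a b [Ga GDa] [Gb GDb]|a b [Ga GDa] [Gb GDb]].
- by rewrite Dscal; split; [apply: scalG | apply: gen_subalg0].
- by have [-> _] := derD a b; split; apply: addG.
- by have [_ ->] := derD a b; split; [apply: mulG | apply: addG; apply: mulG].
Qed.

End Derivation.

Section LinearDescent.
Variables (k : fieldType) (K : k -> Prop).
Hypothesis subK : is_subfield K.

Definition solves N (sys : (nat -> k) -> Prop) (c : nat -> k) :=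
  forall e, sys e -> \sum_(i < N) e i * c i = 0.

Section Elimination.
Variables (N : nat) (sys : (nat -> k) -> Prop) (e0 : nat -> k).
Hypotheses (sys_e0 : sys e0) (e0N_neq0 : e0 N != 0).

Definition pivot_elim (e : nat -> k) i := e i - e N / e0 N * e0 i.

Definition elim_sys e' := exists2 e, sys e & e' = pivot_elim e.

Definition back_subst (c : nat -> k) i :=
  if i == N then - (\sum_(j < N) e0 j * c j) / e0 N else c i.

Lemma sum_pivot_elim e c : \sum_(i < N) pivot_elim e i * c i =
  \sum_(i < N) e i * c i - e N / e0 N * \sum_(i < N) e0 i * c i.
Proof.
by rewrite mulr_sumr -sumrB; apply: eq_bigr => i _; rewrite /pivot_elim mulrBl mulrA.
Qed.

Lemma solves_elim c : solves N.+1 sys c -> solves N elim_sys c.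
Proof.
move=> sol _ [e Ee ->]; rewrite sum_pivot_elim.
move: (sol e Ee) (sol e0 sys_e0); rewrite !big_ord_recr /=.
move=> /eqP; rewrite addr_eq0 => /eqP-> /eqP; rewrite addr_eq0 => /eqP->.
by rewrite mulrN opprK mulrA divfK // addNr.
Qed.

Lemma solves_back_subst c : solves N elim_sys c -> solves N.+1 sys (back_subst c).
Proof.
move=> sol e Ee; rewrite big_ord_recr /= /back_subst eqxx.
under eq_bigr => i _ do rewrite (ltn_eqF (ltn_ord i)).
have /eqP := sol _ (ex_intro2 _ _ e Ee erefl).
by rewrite sum_pivot_elim subr_eq0 => /eqP->; field.
Qed.

Lemma pivot_elim_subfield e : (forall i, K (e i)) -> (forall i, K (e0 i)) ->
  forall i, K (pivot_elim e i).
Proof.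
move=> Ke Ke0 i; apply: (subfieldB subK) => //; do 2 apply: (subfieldM subK) => //.
exact: (subfieldV subK).
Qed.

Lemma back_subst_subfield c : (forall i, K (e0 i)) -> (forall i, K (c i)) ->
  forall i, K (back_subst c i).
Proof.
move=> Ke0 Kc i; rewrite /back_subst; case: (i == N) => //.
apply: (subfieldM subK) => //; last exact: (subfieldV subK).
by apply/(subfieldN subK)/(subfield_sum subK) => j _; apply: (subfieldM subK).
Qed.

End Elimination.

(* Eliminate the last unknown with an equation whose last coefficient is
   nonzero; if there is none, the last unit vector is a nonzero [K]-solution. *)
Lemma solution_descent N sys : (forall e, sys e -> forall i, K (e i)) ->
  (forall c, (forall i, K (c i)) -> solves N sys c -> forall i, (i < N)%N -> c i = 0) ->
  forall c, solves N sys c -> forall i, (i < N)%N -> c i = 0.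
Proof.
elim: N sys => [|N IH] sys Ksys Ktriv c sol i // ltiN.
have [[e0 Ee0 e0N]|nopivot] := classic (exists2 e0, sys e0 & e0 N != 0); last first.
  have Kdelta j : K (j == N)%:R.
    by case: (j == N); [apply: (subfield1 subK) | apply: (subfield0 subK)].
  suff /(Ktriv _ Kdelta)/(_ N (ltnSn N))/eqP : solves N.+1 sys (fun j => (j == N)%:R).
    by rewrite eqxx oner_eq0.
  move=> e Ee; rewrite big_ord_recr /= eqxx mulr1 big1 => [|j _]; last first.
    by rewrite (ltn_eqF (ltn_ord j)) mulr0.
  by rewrite add0r; case: (eqVneq (e N) 0) => // ?; case: nopivot; exists e.
have cN : forall j, (j < N)%N -> c j = 0.
  apply: (IH (elim_sys N sys e0)); last exact: solves_elim.
    by move=> _ [e Ee ->]; apply: pivot_elim_subfield; apply: Ksys.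
  move=> c' Kc' sol' j ltjN.
  have := Ktriv _ (back_subst_subfield N (Ksys _ Ee0) Kc') (solves_back_subst e0N sol').
  by move=> /(_ j (leqW ltjN)); rewrite /back_subst (ltn_eqF ltjN).
move: ltiN; rewrite ltnS leq_eqVlt => /orP[/eqP->|]; last exact: cN.
have := sol e0 Ee0; rewrite big_ord_recr /= big1 => [|j _]; last by rewrite cN ?mulr0.
by rewrite add0r => /eqP; rewrite mulf_eq0 (negPf e0N) => /eqP.
Qed.

Lemma mpoly_free_descent n N (P : nat -> {mpoly k[n]}) :
  (forall j m, K (P j)@_m) ->
  (forall c : nat -> k, (forall j, K (c j)) ->
     \sum_(j < N) c j *: P j = 0 -> forall j, (j < N)%N -> c j = 0) ->
  forall c : nat -> k, \sum_(j < N) c j *: P j = 0 -> forall j, (j < N)%N -> c j = 0.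
Proof.
move=> KP Kfree.
have coef_comb (c : nat -> k) m : (\sum_(j < N) c j *: P j)@_m = \sum_(j < N) (P j)@_m * c j.
  by rewrite raddf_sum /=; apply: eq_bigr => j _; rewrite mcoeffZ mulrC.
pose sys (e : nat -> k) := exists m, e = fun j => (P j)@_m.
have solvesP (c : nat -> k) : solves N sys c <-> \sum_(j < N) c j *: P j = 0.
  split=> [sol|comb0 _ [m ->]]; last by rewrite -coef_comb comb0 mcoeff0.
  by apply/mpolyP => m; rewrite mcoeff0 coef_comb; apply: (sol (fun j => (P j)@_m)); exists m.
move=> c /solvesP; apply: solution_descent => [_ [m ->] j|c' Kc' /solvesP]; first exact: KP.
exact: Kfree.
Qed.

End LinearDescent.

Lemma ex_least_nat (P : nat -> Prop) :
  (exists n, P n) -> exists2 n, P n & forall m, P m -> (n <= m)%N.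
Proof.
move=> [n Pn]; elim/ltn_ind: n Pn => n IH Pn.
have [[m Pm ltmn]|none] := classic (exists2 m, P m & (m < n)%N); first exact: IH m ltmn Pm.
by exists n => // m Pm; rewrite leqNgt; apply/negP => ltmn; apply: none; exists m.
Qed.

Lemma nondecreasing_subseq (g : nat -> nat) : exists phi : nat -> nat,
  (forall i, phi i < phi i.+1)%N /\ (forall i, g (phi i) <= g (phi i.+1))%N.
Proof.
have /choice[next Hnext] a : exists j,
    (a < j)%N /\ forall j', (a < j')%N -> (g j <= g j')%N.
  have : exists v, exists2 j, (a < j)%N & g j = v by exists (g a.+1), a.+1.
  move=> /ex_least_nat[v [j ltaj <-] minv].
  by exists j; split => // j' ltaj'; apply: minv; exists j'.
exists (fun i => iter i.+1 next 0); split => i; first exact: (Hnext _).1.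
rewrite [iter i.+1 _ _]iterS; apply: (Hnext _).2.
exact: ltn_trans (Hnext _).1 (Hnext _).1.
Qed.

Lemma dickson_pair n (u : nat -> 'X_{1..n}) : exists i j, (i < j)%N /\ (u i <= u j)%MM.
Proof.
have mono_prefix c : exists phi : nat -> nat, {homo phi : i j / (i < j)%N} /\
    forall c' : 'I_n, (c' < c)%N -> forall i j, (i <= j)%N -> (u (phi i) c' <= u (phi j) c')%N.
  elim: c => [|c [phi [phi_mono phi_c]]]; first by exists id; split.
  have [ltcn|] := ltnP c n; last first.
    by exists phi; split => // c' _; apply: phi_c; apply: leq_trans (ltn_ord c') _.
  have [psi [psi_lt psi_le]] := nondecreasing_subseq (fun i => u (phi i) (Ordinal ltcn)).
  have psi_mono : {homo psi : i j / (i < j)%N} by apply: homo_ltn => //; apply: ltn_trans.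
  exists (phi \o psi); split => [i j /psi_mono/phi_mono //|c'].
  rewrite ltnS leq_eqVlt => /orP[/eqP eqc'c|ltc'c] i j leij /=; last first.
    by apply: phi_c => //; apply: ltnW_homo.
  have -> : c' = Ordinal ltcn by apply: val_inj.
  exact: (homo_leq (f := fun i => u (phi (psi i)) (Ordinal ltcn)) leqnn leq_trans).
have [phi [phi_mono phi_n]] := mono_prefix n.
by exists (phi 0), (phi 1); split; [apply: phi_mono | apply/mnm_lepP => c; apply: phi_n].
Qed.

Lemma dickson n (P : 'X_{1..n} -> Prop) : exists G : seq 'X_{1..n},
  (forall g, g \in G -> P g) /\ (forall m, P m -> exists2 g, g \in G & (g <= m)%MM).
Proof.
(* Otherwise a choice of an element of [P] above no member of each finite list
   builds a sequence contradicting [dickson_pair]. *)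
apply: NNPP => noG.
have /choice[next Hnext] (G : seq 'X_{1..n}) : exists m,
    (forall g, g \in G -> P g) -> P m /\ forall g, g \in G -> ~~ (g <= m)%MM.
  apply: NNPP => noext; apply: noG; exists G.
  have [PG|PG] := classic (forall g, g \in G -> P g); last by case: noext; exists 0%MM.
  split => // m Pm; apply: NNPP => nobelow; apply: noext; exists m => _.
  by split => // g gG; apply/negP => legm; apply: nobelow; exists g.
pose hist j := iter j (fun s => rcons s (next s)) [::].
have hist_P j g : g \in hist j -> P g.
  elim: j g => [|j IH] g //=; rewrite mem_rcons inE => /orP[/eqP->|/IH //].
  exact: (Hnext _ IH).1.
have hist_mem i j : (i < j)%N -> next (hist i) \in hist j.
  elim: j => // j IH; rewrite ltnS leq_eqVlt => /orP[/eqP->|ltij] /=;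
    by rewrite mem_rcons inE ?eqxx // IH ?orbT.
have [i [j [ltij le_ij]]] := dickson_pair (fun j => next (hist j)).
by move: le_ij; rewrite (negPf ((Hnext _ (hist_P j)).2 _ (hist_mem i j ltij))).
Qed.

Section StandardMonomials.
Variables (k : fieldType) (B : comAlgType k) (gens : seq B).
Local Notation n := (size gens).
Implicit Types (m : 'X_{1..n}) (p q : {mpoly k[n]}) (F : k -> Prop).

Definition mon m : B := mmap1 (fun i => gens`_i) m.

Definition mev p : B := mmap (GRing.in_alg B) (fun i => gens`_i) p.

Definition mon_in (S : 'X_{1..n} -> Prop) (b : B) := exists2 m, S m & b = mon m.

(* [<%O] is the graded lexicographic order, a well-order compatible with [+]. *)
Definition standard m :=
  ~ in_span (fun _ => True) (mon_in (fun m' => (m' < m)%O)) (mon m).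

Lemma monE m : mon m = \prod_(i < n) gens`_i ^+ m i.
Proof. by []. Qed.

Lemma monD m1 m2 : mon (m1 + m2)%MM = mon m1 * mon m2.
Proof. by apply: commr_mmap1_M => i x; apply: mulrC. Qed.

Lemma monU (i : 'I_n) : mon U_(i)%MM = gens`_i.
Proof. exact: mmap1U. Qed.

Lemma mon_inT1 : mon_in (fun _ => True) 1.
Proof. by exists 0%MM; rewrite // /mon mmap11. Qed.

Lemma mon_inTM x y : mon_in (fun _ => True) x -> mon_in (fun _ => True) y ->
  mon_in (fun _ => True) (x * y).
Proof. by move=> [m1 _ ->] [m2 _ ->]; exists (m1 + m2)%MM; rewrite ?monD. Qed.

Lemma mevD p q : mev (p + q) = mev p + mev q.
Proof. exact: raddfD. Qed.

Lemma mev_sum (I : Type) (r : seq I) (P : pred I) (f : I -> {mpoly k[n]}) :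
  mev (\sum_(i <- r | P i) f i) = \sum_(i <- r | P i) mev (f i).
Proof. exact: raddf_sum. Qed.

Lemma mevZ c p : mev (c *: p) = c *: mev p.
Proof. by rewrite /mev mmapZ mulr_algl. Qed.

Lemma mevX m : mev 'X_[m] = mon m.
Proof. exact: mmapX. Qed.

Lemma mev_in_span p : in_span (fun _ => True) (mon_in (fun m => m \in msupp p)) (mev p).
Proof.
exists [seq (p@_m, mon m) | m <- msupp p]; split.
  by move=> _ /mapP[m ? ->]; split => //; exists m.
by rewrite big_map /mev /mmap; apply: eq_bigr => m _; rewrite mulr_algl.
Qed.

Lemma in_span_mpoly F S b : is_subfield F -> in_span F (mon_in S) b ->
  exists p, [/\ forall m, F p@_m, forall m, m \in msupp p -> S m & mev p = b].
Proof.
move=> subF [l [Hl ->]]; elim: l Hl => [|[c x] l IH] Hl.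
  exists 0; split=> [m|m|]; last by rewrite big_nil; apply: raddf0.
    by rewrite mcoeff0; apply: (subfield0 subF).
  by rewrite msupp0.
have [p [Fp Sp mevp]] := IH (fun r rl => Hl r (@mem_behead _ (_ :: l) _ rl)).
have [/= Fc [m Sm ->]] := Hl _ (mem_head _ _).
exists (c *: 'X_[m] + p); split=> [m'|m'|]; last by rewrite big_cons -mevp mevD mevZ mevX.
  rewrite mcoeffD mcoeffZ mcoeffX; apply: (subfieldD subF) => //.
  apply: (subfieldM subF) => //.
  by case: (m == m'); [apply: (subfield1 subF) | apply: (subfield0 subF)].
move=> /msuppD_le; rewrite mem_cat => /orP[/msuppZ_le|/Sp //].
by rewrite msuppX inE => /eqP->.
Qed.

Lemma mon_in_span_standard m :
  in_span (fun _ => True) (mon_in (fun m' => standard m' /\ (m' <= m)%O)) (mon m).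
Proof.
elim/(@ltmwf n): m => m IH.
have [stdm|/NNPP] := classic (standard m); first by apply: in_span_mem => //; exists m.
apply: in_span_trans => // _ [m' ltm'm ->].
apply: in_span_mono (IH m' ltm'm) => // _ [m'' [stdm'' lem''m'] ->].
by exists m'' => //; split => //; apply: le_trans lem''m' (ltW ltm'm).
Qed.

Lemma nonstandard_span g : ~ standard g ->
  in_span (fun _ => True) (mon_in (fun m' => standard m' /\ (m' < g)%O)) (mon g).
Proof.
move=> /NNPP; apply: in_span_trans => // _ [m' ltm'g ->].
apply: in_span_mono (mon_in_span_standard m') => // _ [m'' [stdm'' lem''m'] ->].
by exists m'' => //; split => //; apply: le_lt_trans lem''m' ltm'g.
Qed.

(* The leading monomial of a nonzero relation would be a combination of smaller ones. *)
Lemma standard_free p : (forall m, m \in msupp p -> standard m) -> mev p = 0 -> p = 0.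
Proof.
move=> stdp mevp0; apply/eqP; apply: contraT => p_neq0; exfalso.
set M := mlead p; set c := p@_M.
have c_neq0 : c != 0 by rewrite mleadc_eq0.
have := stdp M (mlead_supp p_neq0); apply.
pose q := - c^-1 *: (p - c *: 'X_[M]).
have q_lt m : m \in msupp q -> (m < M)%O.
  move=> /msuppZ_le; rewrite mcoeff_msupp mcoeffB mcoeffZ mcoeffX.
  have [<-|neMm] := eqVneq M m; first by rewrite mulr1 subrr eqxx.
  rewrite mulr0 subr0 -mcoeff_msupp => /msupp_le_mlead; rewrite le_eqVlt.
  by rewrite eq_sym (negPf neMm).
have -> : mon M = mev q.
  by rewrite mevZ -scaleNr mevD mevZ mevp0 mevX add0r scalerA mulrNN mulVf ?scale1r.
by apply: in_span_mono (mev_in_span q) => // _ [m /q_lt ltmM ->]; exists m.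
Qed.

End StandardMonomials.
Arguments mon {k B} gens m.
Arguments mev {k B} gens p.
Arguments mon_in {k B} gens S b.
Arguments standard {k B} gens m.

Section FieldOfDefinition.
Variables (k : fieldType) (B : comAlgType k) (gens : seq B).
Local Notation n := (size gens).
Local Notation mon := (mon gens).
Local Notation mev := (mev gens).
Local Notation mon_in := (mon_in gens).
Local Notation standard := (standard gens).
Implicit Types (F : k -> Prop) (m : 'X_{1..n}).

Lemma mon_gen_subalg F x : is_subfield F ->
  mon_in (fun _ => True) x -> gen_subalg F gens x.
Proof.
move=> subF [m _ ->]; rewrite monE.
have [_ _ mulG] := gen_subalgP F gens.
apply: big_ind => // [|i _]; first exact: gen_subalg1.
elim: (m i) => [|e IH]; first by rewrite expr0; apply: gen_subalg1.
by rewrite exprS; apply: mulG => //; apply: mem_gen_subalg; apply: mem_nth.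
Qed.

Lemma span_gen_subalg F x : is_subfield F ->
  in_span F (mon_in (fun _ => True)) x -> gen_subalg F gens x.
Proof.
move=> subF [l [Hl ->]]; have [scalG addG mulG] := gen_subalgP F gens.
rewrite big_seq; apply: big_ind => // [|p /Hl[Fp monp]]; first exact: gen_subalg0.
by rewrite -mulr_algl; apply: mulG; [apply: scalG | apply: mon_gen_subalg].
Qed.

Lemma gen_subalg_span F x : is_subfield F ->
  gen_subalg F gens x -> in_span F (mon_in (fun _ => True)) x.
Proof.
move=> subF; apply.
  apply: in_span_subalg; [exact: subfieldM | exact: mon_inT1 | exact: mon_inTM].
move=> y /(nthP 0)[i ltin <-]; apply: in_span_mem; first exact: subfield1.
by exists U_(Ordinal ltin)%MM; rewrite ?monU.
Qed.

(* Reduce [m] by a generator [g <= m] of the nonstandard monomials and recurse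
   on the smaller monomials [m' + (m - g)], [m' < g]. *)
Lemma standard_span_over F (G : seq 'X_{1..n}) : is_subfield F ->
  (forall m, ~ standard m -> exists2 g, g \in G & (g <= m)%MM) ->
  (forall g, g \in G ->
     in_span F (mon_in (fun m' => standard m' /\ (m' < g)%O)) (mon g)) ->
  forall m, in_span F (mon_in standard) (mon m).
Proof.
move=> subF Gbasis Gred; elim/(@ltmwf n) => m IH.
have [stdm|/Gbasis[g gG legm]] := classic (standard m).
  by apply: in_span_mem; [apply: subfield1 | exists m].
rewrite -(submK legm) addmC monD.
apply: (in_span_trans (V := in_span F (mon_in standard))) => //; first exact: subfieldM.
apply: in_span_mulr (Gred g gG) => _ [m' [_ ltm'g] ->]; rewrite -monD; apply: IH.
by rewrite -[X in (_ < X)%O](submK legm) [X in (_ < X)%O]addmC ltmc_add2l.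
Qed.

(* The coefficients of the reductions of the minimal nonstandard monomials
   and of the expansions of the elements of [bs]. *)
Lemma field_of_definition (bs : seq B) :
  (forall b, in_span (fun _ => True) (mon_in (fun _ => True)) b) ->
  exists cs : seq k, forall F, is_subfield F -> {in cs, forall c, F c} ->
    (forall m, in_span F (mon_in standard) (mon m)) /\
    {in bs, forall b, in_span F (mon_in (fun _ => True)) b}.
Proof.
move=> spanB; have [G [Gns Gbasis]] := dickson (fun m => ~ standard m).
have /choice[red Hred] (g : 'X_{1..n}) : exists l : seq (k * B), ~ standard g ->
    (forall p, p \in l -> mon_in (fun m' => standard m' /\ (m' < g)%O) p.2) /\
    mon g = \sum_(p <- l) p.1 *: p.2.
  have [stdg|/nonstandard_span[l [Hl ->]]] := classic (standard g).
    by exists [::] => /(_ stdg).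
  by exists l => _; split => // p /Hl[].
have /choice[rep Hrep] (b : B) : exists l : seq (k * B),
    (forall p, p \in l -> mon_in (fun _ => True) p.2) /\ b = \sum_(p <- l) p.1 *: p.2.
  by have [l [Hl ->]] := spanB b; exists l; split => // p /Hl[].
exists (flatten [seq map fst (red g) | g <- G] ++ flatten [seq map fst (rep b) | b <- bs]).
move=> F subF Fcs; split.
  apply: (standard_span_over subF Gbasis) => g gG.
  have [Hl ->] := Hred g (Gns g gG); exists (red g); split => // p pl; split; last exact: Hl.
  apply: Fcs; rewrite mem_cat; apply/orP; left.
  by apply/flattenP; exists (map fst (red g)); apply: map_f.
move=> b bbs; have [Hl ->] := Hrep b; exists (rep b); split => // p pl; split; last exact: Hl.
apply: Fcs; rewrite mem_cat; apply/orP; right.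
by apply/flattenP; exists (map fst (rep b)); apply: map_f.
Qed.

Lemma lin_indep_lift F s : is_subfield F ->
  (forall m, in_span F (mon_in standard) (mon m)) ->
  {in s, forall x, gen_subalg F gens x} ->
  lin_indep_over F s -> lin_indep_over (fun _ => True) s.
Proof.
move=> subF stdF s_gen indep c size_c _ sum0 i.
have s_std x : x \in s -> in_span F (mon_in standard) x.
  move=> /s_gen /(gen_subalg_span subF).
  by apply: in_span_trans => [|_ [m _ ->]]; [apply: subfieldM | apply: stdF].
have /choice[P HP] (j : nat) : exists P : {mpoly k[n]},
    [/\ forall m, F P@_m, forall m, m \in msupp P -> standard m & mev P = s`_j].
  have [ltj|lej] := ltnP j (size s).
    exact: in_span_mpoly subF (s_std _ (mem_nth 0 ltj)).
  exists 0; split=> [m|m|]; first by rewrite mcoeff0; apply: (subfield0 subF).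
    by rewrite msupp0.
  by rewrite nth_default //; apply: raddf0.
have mev_comb a : mev (\sum_(j < size s) a j *: P j) = \sum_(j < size s) a j *: s`_j.
  by rewrite mev_sum; apply: eq_bigr => j _; case: (HP j) => _ _ <-; rewrite mevZ.
have [lti|lei] := ltnP i (size s); last by rewrite nth_default // size_c.
apply: (mpoly_free_descent subF (P := P)) lti => [j m|a Fa comb0 j ltj|].
- by case: (HP j).
- have := indep (mkseq a (size s)) (size_mkseq _ _) _ _ j; rewrite nth_mkseq //; apply.
    by move=> _ /mapP[j' _ ->].
  under eq_bigr => j' _ do rewrite nth_mkseq //.
  by rewrite -mev_comb comb0; apply: raddf0.
- apply: standard_free; last by rewrite mev_comb.
  move=> m /msupp_sum_le /flattenP[_ /mapP[j _ ->] /msuppZ_le].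
  by case: (HP j) => _ + _; apply.
Qed.
End FieldOfDefinition.

Theorem lemma1p2 (k : closedFieldType) (B : comAlgType k)
  (R : B -> Prop) (D : B -> B) :
  [pchar k] =i pred0 ->
  (* Y = Spec B : irreducible affine k-variety *)
  fg_subalg_over (fun _ : k => True) (fun _ : B => True) ->
  is_domain B ->
  (* T = Spec R, R a k-subalgebra of B (f dominant <=> f^* injective) *)
  fg_subalg_over (fun _ : k => True) R ->
  (* general fibers irreducible and reduced *)
  (exists g, R g /\ g <> 0 /\
     forall m, is_max_ideal_of R m -> ~ m g -> is_prime_ideal (ext_ideal m)) ->
  (* D an R-trivial derivation of B *)
  is_derivation D -> (forall r, R r -> D r = 0) ->
  (* D (x)_R R/m locally nilpotent for every closed point of T *)
  (forall m, is_max_ideal_of R m -> loc_nilp_mod m D) ->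
  exists (K0 : k -> Prop) (B0 R0 : B -> Prop),
    [/\ fg_field_over_Q K0,
        fg_subalg_over K0 B0 /\ fg_subalg_over K0 R0,
        (forall x, R0 x -> B0 x),
        is_form_of K0 B0 (fun _ : B => True) /\ is_form_of K0 R0 R &
        (forall x, B0 x -> B0 (D x)) /\
        (loc_nilp_on B0 D <-> loc_nilp_on (fun _ : B => True) D)].
Proof.
move=> _ [_ [gens [_ gensB]]] _ [subR [rgens [rgensR genR]]] _ derD DR _.
have Dscal c : D c%:A = 0 by apply: DR; case: subR => + _ _; apply.
have spanB b := gen_subalg_span (subfieldT k) (fun C subC gsC => gensB C subC gsC b I).
have [cs Hcs] := field_of_definition (map D gens ++ rgens) spanB.
pose K0 := gen_subfield cs.
have subK0 : is_subfield K0 by apply: gen_subfieldP.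
have [stdK0 bsK0] := Hcs K0 subK0 (@mem_gen_subfield _ cs).
pose B0 := gen_subalg K0 gens; pose R0 := gen_subalg K0 rgens.
have bsB0 b : b \in map D gens ++ rgens -> B0 b by move=> /bsK0/span_gen_subalg; apply.
have R0B0 x : R0 x -> B0 x.
  by apply; [apply: gen_subalgP | move=> y yr; apply: bsB0; rewrite mem_cat yr orbT].
exists K0, B0, R0; split=> //.
- exact: gen_subfield_fg.
- by split; apply: gen_subalg_fg.
- split; apply: gen_subalg_form => //.
  + by move=> x _ C subC gsC; apply: gensB.
  + by move=> s; apply: (lin_indep_lift subK0 stdK0).
  + by move=> x Rx C subC gsC; apply: genR.
  + by move=> s s_R0; apply: (lin_indep_lift subK0 stdK0) => x /s_R0 /R0B0.
split; first apply: (gen_subalg_derivation derD Dscal subK0).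
  by move=> y yg; apply: bsB0; rewrite mem_cat map_f.
split=> [nilB0|nilB a _]; last exact: nilB.
apply: (loc_nilp_of_span derD Dscal) nilB0 => b.
by apply: in_span_mono (spanB b) => // x; apply: mon_gen_subalg.
Qed.
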